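(* Let $d\ge2$, $s_n=2(\log n)^2$, $s_{n,+}=(3s_n)^d$ and $W_{s_{n,+}}=[-s_{n,+}^{1/d}/2,s_{n,+}^{1/d}/2]^d$. If $\varepsilon>0$ is sufficiently small, then $$\big|\{(x_0,x_1,x_2)\in W_{s_{n,+}}^3:\ d_{01}<d_{012}\le d_{01}+n^{-2+\varepsilon}\}\big|\in O(n^{-1/4})\quad(n\to\infty),$$ where $|\cdot|$ denotes Lebesgue measure on $(\mathbb R^d)^3$.
   Context: $d_{01}=|x_0-x_1|/2$, and $d_{012}=\inf\{r>0: B_r(x_0)\cap B_r(x_1)\cap B_r(x_2)\ne\varnothing\}$ is the Čech filtration time of the triangle $\{x_0,x_1,x_2\}$. *)

From HB Require Import structures.
From mathcomp Require Import all_boot all_order all_algebra.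
From mathcomp Require Import all_classical all_reals all_analysis.
Set Implicit Arguments. Unset Strict Implicit. Unset Printing Implicit Defensive.
Import Order.TTheory GRing.Theory Num.Theory.
Import numFieldNormedType.Exports.
Local Open Scope classical_set_scope.
Local Open Scope ring_scope.

Section Defs.
Variables (R : realType).

Definition box {I : finType} (a b : I -> R) : set (I -> R) :=
  [set x | forall i, a i <= x i <= b i].

Definition box_vol {I : finType} (a b : I -> R) : R :=
  \prod_(i : I) (b i - a i).

(* Lebesgue (outer) measure on R^I: infimum of the total volume of countable
   covers by closed boxes.  On Lebesgue measurable sets (e.g. Borel sets)
   this is the Lebesgue measure. *)
Definition lebesgue_outer {I : finType} (A : set (I -> R)) : \bar R :=
  ereal_inf [set (\sum_(0 <= k <oo) (box_vol (ab.1 k) (ab.2 k))%:E)%E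
            | ab in [set ab : (nat -> I -> R) * (nat -> I -> R) |
                      (forall k i, ab.1 k i <= ab.2 k i) /\
                      A `<=` \bigcup_k box (ab.1 k) (ab.2 k)]].

Definition edist {d : nat} (x y : 'I_d -> R) : R :=
  Num.sqrt (\sum_(k < d) (x k - y k) ^+ 2).

Definition d01 {d : nat} (x0 x1 : 'I_d -> R) : R := edist x0 x1 / 2.

Definition d012 {d : nat} (x0 x1 x2 : 'I_d -> R) : R :=
  inf [set r : R | 0 < r /\ exists y : 'I_d -> R,
         edist x0 y <= r /\ edist x1 y <= r /\ edist x2 y <= r].

Definition Wcube (d : nat) (s : R) : set ('I_d -> R) :=
  [set x | forall k, `|x k| <= powR s (d%:R^-1) / 2].

Definition s_n (n : nat) : R := 2 * (ln (n%:R)) ^+ 2.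
Definition s_plus (d n : nat) : R := (3 * s_n n) ^+ d.

(* The set of triples (x0,x1,x2) in W^3 with d01 < d012 <= d01 + n^{-2+eps},
   as a subset of R^(3 x d), triple component j, coordinate k = p (j, k). *)
Definition triple {d : nat} (p : 'I_3 * 'I_d -> R) (j : 'I_3) : 'I_d -> R :=
  fun k => p (j, k).

Definition bad_set (d n : nat) (eps : R) : set ('I_3 * 'I_d -> R) :=
  [set p | (forall j, @Wcube d (s_plus d n) (triple p j)) /\
     let x0 := triple p ord0 in
     let x1 := triple p (inord 1) in
     let x2 := triple p (inord 2) in
     d01 x0 x1 < d012 x0 x1 x2 /\
     d012 x0 x1 x2 <= d01 x0 x1 + powR (n%:R) (-2 + eps)].

End Defs.

(* Let f = <x2 - x0, x2 - x1> be the power of x2 with respect to the sphere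
   with diameter [x0, x1].  If f <= 0, the ball of radius d01 about the
   midpoint contains all three points, so d012 = d01; if d012 <= d01 + del, a
   nearly optimal Cech centre and Apollonius' identity give f <= sqrt del * A^2,
   where A bounds d01.  Singling out the coordinate t = x2_k0 we get
   f = (t - m)^2 + g with m, g depending only on the other 3d - 1 coordinates,
   so 0 < f <= tau confines t to two intervals of length about sqrt tau.
   Rounding the other coordinates to a fine grid turns this into a cover of the
   bad set by boxes of total volume 2 (2B)^(3d-1) (sqrt tau + o(1)), with
   B = 3 (ln n)^2 the half side of the cube.  For del = n^(-2+eps), eps <= 1/2,
   this is polylog(n) * n^(-3/8) = O(n^(-1/4)). *)

From HB Require Import structures.
From mathcomp Require Import all_boot all_order all_algebra.
From mathcomp Require Import all_classical all_reals all_analysis.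
From mathcomp Require Import ring lra.

Set Implicit Arguments.
Unset Strict Implicit.
Unset Printing Implicit Defensive.
Import Order.TTheory GRing.Theory Num.Theory.
Local Open Scope classical_set_scope.
Local Open Scope ring_scope.

Section BoxCovers.
Variables (R : realType) (I : finType).
Implicit Types (A T : set (I -> R)) (a b : I -> R).

Lemma box_vol_ge0 a b : (forall i, a i <= b i) -> 0 <= box_vol a b.
Proof. by move=> ab; apply: prodr_ge0 => i _; rewrite subr_ge0. Qed.

Lemma box_volDr a (c : I -> R) : box_vol a (fun i => a i + c i) = \prod_i c i.
Proof. by apply: eq_bigr => i _; rewrite addrAC subrr add0r. Qed.

Lemma lebesgue_outer_le_fin_cover (i0 : I) (F : finType) A (lo hi : F -> I -> R) :
  (forall z i, lo z i <= hi z i) ->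
  A `<=` (fun x => exists z, box (lo z) (hi z) x) ->
  (lebesgue_outer A <= (\sum_z box_vol (lo z) (hi z))%:E)%E.
Proof.
move=> lohi cover.
pose a k := if insub k : option 'I_#|F| is Some i then lo (enum_val i) else 0.
pose b k := if insub k : option 'I_#|F| is Some i then hi (enum_val i) else 0.
have ab k i : a k i <= b k i by rewrite /a /b; case: insubP.
have coverab : A `<=` \bigcup_k box (a k) (b k).
  move=> x /cover[z xz]; exists (enum_rank z) => //.
  by rewrite /a /b valK enum_rankK.
apply: le_trans (_ : (\sum_(0 <= k <oo) (box_vol (a k) (b k))%:E <= _)%E).
  by apply: ereal_inf_lbound; exists (a, b).
rewrite (nneseries_split 0 #|F|); last by move=> k _; rewrite lee_fin box_vol_ge0.
rewrite eseries0 ?adde0; last first.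
  move=> k; rewrite add0n => Fk _; rewrite /a /b insubN ?ltnNge ?Fk //.
  by rewrite /box_vol (bigD1 i0) //= subrr mul0r.
rewrite sumEFin lee_fin add0n big_mkord.
rewrite (eq_bigr (fun i => box_vol (lo (enum_val i)) (hi (enum_val i)))).
  by rewrite [leRHS](big_enum_val (A := predT)).
by move=> i _; rewrite /a /b valK.
Qed.

Lemma lebesgue_outer_le_translates (i0 : I) (F : finType) T (lo : F -> I -> R)
    (side : I -> R) :
  (forall i, 0 <= side i) ->
  T `<=` (fun x => exists z, box (lo z) (fun i => lo z i + side i) x) ->
  (lebesgue_outer T <= (#|F|%:R * \prod_i side i)%:E)%E.
Proof.
move=> side0 cover; have lohi z i : lo z i <= lo z i + side i by rewrite lerDl.
apply: le_trans (lebesgue_outer_le_fin_cover i0 lohi cover) _.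
by rewrite (eq_bigr _ (fun z _ => box_volDr (lo z) side)) sumr_const mulr_natl.
Qed.

Lemma exists_grid_cell (K : nat) (lo w y : R) : (0 < K)%N ->
  lo <= y <= lo + K%:R * w -> exists i : 'I_K, lo + i%:R * w <= y <= lo + i.+1%:R * w.
Proof.
elim: K => [//|[|K] IH] _ /andP[loy yhi].
  by exists ord0; rewrite mul0r addr0 loy.
have [yK|Ky] := leP y (lo + K.+1%:R * w).
  by have [//|i] := IH _ (introT andP (conj loy yK)); exists (widen_ord (leqnSn _) i).
by exists ord_max; rewrite yhi ltW.
Qed.

Lemma lebesgue_outer_le_windows (i0 : I) (S : finType) (K : nat) (B l : R) T
    (L : S -> (I -> R) -> R) :
  (0 < K)%N -> 0 <= B -> 0 <= l ->
  T `<=` box (fun=> - B) (fun=> B) ->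
  (forall x p, T x -> (forall i, i != i0 -> p i <= x i <= p i + 2 * B / K%:R) ->
     exists s, L s p <= x i0 <= L s p + l) ->
  (lebesgue_outer T <= (#|S|%:R * (2 * B) ^+ #|I|.-1 * l)%:E)%E.
Proof.
move=> K0 B0 l0 TB TL.
have K0R : 0 < K%:R :> R by rewrite ltr0n.
pose h := 2 * B / K%:R; pose w := l / K%:R.
have h0 : 0 <= h by rewrite divr_ge0 ?mulr_ge0 // ltW.
have w0 : 0 <= w by rewrite divr_ge0 // ltW.
have Kh : K%:R * h = 2 * B by rewrite mulrCA mulfV ?gt_eqF ?mulr1.
have Kw : K%:R * w = l by rewrite mulrCA mulfV ?gt_eqF ?mulr1.
(* [corner c] ignores [c i0], so a window is fixed before its cell is chosen. *)
pose corner (c : {ffun I -> 'I_K}) i := if i == i0 then 0 else - B + (c i)%:R * h.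
pose lo (z : {ffun I -> 'I_K} * S) i :=
  if i == i0 then L z.2 (corner z.1) + (z.1 i)%:R * w else - B + (z.1 i)%:R * h.
pose side i := if i == i0 then w else h.
have cover : T `<=` (fun x => exists z, box (lo z) (fun i => lo z i + side i) x).
  move=> x Tx.
  have /fin_all_exists [c xc] : forall i, exists j : 'I_K,
      - B + j%:R * h <= x i <= - B + j.+1%:R * h.
    move=> i; apply: exists_grid_cell => //; rewrite Kh.
    by have := TB x Tx i; rewrite /= => /andP[]; lra.
  pose c1 := finfun c.
  have [s xs] : exists s, L s (corner c1) <= x i0 <= L s (corner c1) + l.
    apply: TL => // i /negbTE ii0; rewrite /corner ii0 ffunE -/h.
    by have := xc i; rewrite mulrSr; lra.
  have [j xj] : exists j : 'I_K,
      L s (corner c1) + j%:R * w <= x i0 <= L s (corner c1) + j.+1%:R * w.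
    by apply: exists_grid_cell; rewrite ?Kw.
  pose c2 := [ffun i => if i == i0 then j else c i].
  have c21 : corner c2 = corner c1.
    by apply/funext => i; rewrite /corner !ffunE; case: eqP.
  exists (c2, s) => i; rewrite /lo /side /= c21 ffunE.
  by case: eqP => [->|_]; [move: xj | move: (xc i)]; rewrite mulrSr; lra.
have side0 i : 0 <= side i by rewrite /side; case: ifP.
apply: le_trans (lebesgue_outer_le_translates i0 side0 cover) _.
have -> : \prod_i side i = w * h ^+ #|I|.-1.
  rewrite (bigD1 i0) //= {1}/side eqxx -(cardC1 i0) -prodr_const.
  by congr (_ * _); apply: eq_bigr => i /negbTE; rewrite /side => ->.
rewrite lee_fin card_prod card_ffun card_ord natrM natrX.
have : (0 < #|I|)%N by apply/card_gt0P; exists i0.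
case: #|I| => [//|n] _ /=; rewrite le_eqVlt; apply/orP; left; apply/eqP.
by rewrite /w /h exprS expr_div_n; field; rewrite expf_neq0 ?gt_eqF.
Qed.
End BoxCovers.

Section RealInequalities.
Variable R : rcfType.
Implicit Types a b c e g h t u v : R.

Lemma le_sqr_of_sqrtr_le a b : Num.sqrt a <= b -> a <= b ^+ 2.
Proof.
move=> ab; have b0 : 0 <= b := le_trans (sqrtr_ge0 a) ab.
by rewrite -ler_sqrt ?sqr_ge0 // sqrtr_sqr ger0_norm.
Qed.

Lemma sqrtrD_le a b : 0 <= a -> Num.sqrt (a + b) <= Num.sqrt a + Num.sqrt b.
Proof.
move=> a0; have [b0|b0] := leP b 0.
  by rewrite (ler0_sqrtr b0) addr0; apply: ler_wsqrtr; lra.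
rewrite -[leRHS]ger0_norm ?addr_ge0 ?sqrtr_ge0 // -sqrtr_sqr ler_sqrt ?sqr_ge0 //.
rewrite sqrrD !sqr_sqrtr ?(ltW b0) //.
by have := mulr_ge0 (sqrtr_ge0 a) (sqrtr_ge0 b); lra.
Qed.

Lemma sqrrD_le_weighted u v e : 0 < e ->
  (u + v) ^+ 2 <= (1 + e) * u ^+ 2 + (1 + e^-1) * v ^+ 2.
Proof.
move=> e0; rewrite -subr_ge0.
have -> : (1 + e) * u ^+ 2 + (1 + e^-1) * v ^+ 2 - (u + v) ^+ 2 = (e * u - v) ^+ 2 / e.
  by field; rewrite gt_eqF.
by rewrite divr_ge0 ?sqr_ge0 ?ltW.
Qed.

Lemma normrMB_le a b u v e c :
  `|a - u| <= e -> `|b - v| <= e -> `|b| <= c -> `|u| <= c ->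
  `|a * b - u * v| <= 2 * e * c.
Proof.
move=> au bv bc uc; have e0 : 0 <= e := le_trans (normr_ge0 _) au.
have -> : a * b - u * v = (a - u) * b + u * (b - v) by ring.
apply: le_trans (ler_normD _ _) _; rewrite !normrM.
have := ler_pM (normr_ge0 _) (normr_ge0 _) au bc.
have := ler_pM (normr_ge0 _) (normr_ge0 _) uc bv.
lra.
Qed.

(* [t] lies near one of the roots [m +- sqrt (- g)]; the two windows are
   computed from the perturbed data [m'], [g'] alone. *)
Lemma sqr_shift_windows t m m' g g' tau kap h :
  0 < (t - m) ^+ 2 + g -> (t - m) ^+ 2 + g <= tau ->
  `|m - m'| <= h -> `|g - g'| <= kap ->
  let s := Num.sqrt (- g' - kap) in
  let l := Num.sqrt (tau + 2 * kap) + 2 * h in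
  (m' + s - h <= t <= m' + s - h + l) \/ (m' - s + h - l <= t <= m' - s + h).
Proof.
move=> pos le_tau mm' gg' s l.
move: gg' mm'; rewrite !ler_norml => /andP[gg'1 gg'2] /andP[mm'1 mm'2].
have s_le : s <= `|t - m|.
  by rewrite -sqrtr_sqr; apply: ler_wsqrtr; lra.
have le_s : `|t - m| <= Num.sqrt (tau + 2 * kap) + s.
  rewrite -sqrtr_sqr; apply: le_trans (sqrtrD_le _ _); last lra.
  by apply: ler_wsqrtr; lra.
have [tm|tm] := leP 0 (t - m).
  by left; move: s_le le_s; rewrite ger0_norm // /l; lra.
by right; move: s_le le_s; rewrite ltr0_norm // /l; lra.
Qed.

End RealInequalities.

Section Triangle.
Variables (R : realType) (d : nat).
Implicit Types (x y z : 'I_d -> R) (r : R).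

Definition sqdist x y := \sum_k (x k - y k) ^+ 2.

Definition midpoint x y k := (x k + y k) / 2.

(* The power of [z] with respect to the sphere with diameter [[x, y]]. *)
Definition diam_power x y z := \sum_k (z k - x k) * (z k - y k).

Lemma sqdist_ge0 x y : 0 <= sqdist x y.
Proof. by apply: sumr_ge0 => k _; apply: sqr_ge0. Qed.

Lemma sqdist_le_of_edist x y r : edist x y <= r -> sqdist x y <= r ^+ 2.
Proof. exact: le_sqr_of_sqrtr_le. Qed.

Lemma sqdist_le_weighted x y z e : 0 < e ->
  sqdist x z <= (1 + e) * sqdist x y + (1 + e^-1) * sqdist y z.
Proof.
move=> e0; rewrite /sqdist !mulr_sumr -big_split; apply: ler_sum => k _ /=.
have -> : x k - z k = (x k - y k) + (y k - z k) by rewrite addrA subrK.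
exact: sqrrD_le_weighted.
Qed.

Variables x0 x1 x2 : 'I_d -> R.

Lemma sqr_d01 : d01 x0 x1 ^+ 2 = sqdist x0 (midpoint x0 x1).
Proof.
rewrite /d01 /edist expr_div_n sqr_sqrtr ?sqdist_ge0 // mulr_suml.
by apply: eq_bigr => k _; rewrite /midpoint; field.
Qed.

Lemma d01_ge0 : 0 <= d01 x0 x1.
Proof. by rewrite divr_ge0 ?sqrtr_ge0. Qed.

Lemma sqdist_midpoint_sym :
  sqdist x1 (midpoint x0 x1) = sqdist x0 (midpoint x0 x1).
Proof. by apply: eq_bigr => k _; rewrite /midpoint; field. Qed.

Lemma sqdist_midpoint :
  sqdist x2 (midpoint x0 x1) = diam_power x0 x1 x2 + d01 x0 x1 ^+ 2.
Proof.
rewrite sqr_d01 -big_split; apply: eq_bigr => k _ /=.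
by rewrite /midpoint; field.
Qed.

Lemma apollonius y :
  sqdist x0 y + sqdist x1 y = 2 * d01 x0 x1 ^+ 2 + 2 * sqdist y (midpoint x0 x1).
Proof.
rewrite sqr_d01 -big_split !mulr_sumr -big_split; apply: eq_bigr => k _ /=.
by rewrite /midpoint; field.
Qed.

Lemma d012_le y r : 0 < r ->
  edist x0 y <= r -> edist x1 y <= r -> edist x2 y <= r -> d012 x0 x1 x2 <= r.
Proof.
move=> r0 ry0 ry1 ry2; apply: ge_inf; last by split=> //; exists y.
by exists 0 => s [/ltW].
Qed.

Lemma d012_adherent e : 0 < e -> exists r y, [/\ 0 < r,
  r < d012 x0 x1 x2 + e, edist x0 y <= r, edist x1 y <= r & edist x2 y <= r].
Proof.
move=> e0; rewrite /d012; set E := [set _ | _].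
suff [r [r0 [y [ry0 [ry1 ry2]]]] re] : exists2 r, E r & r < inf E + e by exists r, y.
apply: inf_adherent => //; split; last by exists 0 => s [/ltW].
exists (1 + edist x1 x0 + edist x2 x0); split.
  by rewrite ltr_wpDr ?sqrtr_ge0 // ltr_wpDr ?sqrtr_ge0.
exists x0; have -> : edist x0 x0 = 0.
  by rewrite /edist big1 ?sqrtr0 // => k _; rewrite subrr expr0n.
by have := sqrtr_ge0 (sqdist x1 x0); have := sqrtr_ge0 (sqdist x2 x0); rewrite /edist; lra.
Qed.

Lemma d012_le_d01 : diam_power x0 x1 x2 <= 0 -> d012 x0 x1 x2 <= d01 x0 x1.
Proof.
move=> pow0; apply/ler_addgt0Pr => e e0.
have a0 := d01_ge0.
have ed z : sqdist z (midpoint x0 x1) <= d01 x0 x1 ^+ 2 ->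
    edist z (midpoint x0 x1) <= d01 x0 x1 + e.
  move=> zr; apply: le_trans (_ : Num.sqrt (d01 x0 x1 ^+ 2) <= _).
    exact: ler_wsqrtr.
  by rewrite sqrtr_sqr ger0_norm // lerDl ltW.
apply: (d012_le (y := midpoint x0 x1)); first by rewrite ltr_wpDl.
- by apply: ed; rewrite sqr_d01.
- by apply: ed; rewrite sqdist_midpoint_sym sqr_d01.
- by apply: ed; rewrite sqdist_midpoint gerDr.
Qed.

Lemma diam_power_gt0 : d01 x0 x1 < d012 x0 x1 x2 -> 0 < diam_power x0 x1 x2.
Proof. by move=> lt; rewrite ltNge; apply: contraL lt => /d012_le_d01; rewrite leNgt. Qed.

Lemma d01_le B : 0 <= B -> (forall k, `|x0 k| <= B) -> (forall k, `|x1 k| <= B) ->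
  d01 x0 x1 <= d%:R * B.
Proof.
move=> B0 x0B x1B.
rewrite -(ler_pXn2r (n := 2)) ?nnegrE ?d01_ge0 ?mulr_ge0 // sqr_d01.
apply: le_trans (_ : d%:R * B ^+ 2 <= _).
  rewrite mulr_natl -[X in _ <= _ *+ X]card_ord -sumr_const; apply: ler_sum => k _.
  rewrite -ler_sqrt ?sqr_ge0 // !sqrtr_sqr (ger0_norm B0) /midpoint.
  have := x0B k; have := x1B k; rewrite !ler_norml => /andP[? ?] /andP[? ?].
  by apply/andP; split; lra.
rewrite exprMn ler_wpM2r ?sqr_ge0 // expr2 -natrM ler_nat.
by case: d => // n; rewrite leq_pmull.
Qed.

Lemma diam_power_le A del : d01 x0 x1 <= A -> 0 < del -> del <= 1 ->
  d012 x0 x1 x2 <= d01 x0 x1 + del -> diam_power x0 x1 x2 <= Num.sqrt del * (A + 8) ^+ 2.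
Proof.
move=> aA del0 del1 near; set a := d01 x0 x1 in aA near *.
have a0 : 0 <= a := d01_ge0.
have [r [y [r0 rlt ry0 ry1 ry2]]] := d012_adherent del0.
set m := midpoint x0 x1.
have c_le : sqdist y m <= r ^+ 2 - a ^+ 2.
  have := apollonius y; have := sqdist_le_of_edist ry0; have := sqdist_le_of_edist ry1.
  by rewrite -/a -/m; lra.
have r_gap : r ^+ 2 - a ^+ 2 <= 4 * del * (A + 1).
  have -> : r ^+ 2 - a ^+ 2 = (r - a) * (r + a) by ring.
  have : (r - a) * (r + a) <= 2 * del * (r + a) by apply: ler_wpM2r; lra.
  have : 2 * del * (r + a) <= 2 * del * (2 * A + 2) by apply: ler_wpM2l; lra.
  lra.
pose lam := Num.sqrt del.
have lam0 : 0 < lam by rewrite sqrtr_gt0.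
have lam2 : lam ^+ 2 = del by rewrite sqr_sqrtr ?ltW.
have lam_le : del <= lam by rewrite -lam2 expr2 ger_pMl // -sqrtr1 ler_wsqrtr.
have x2y := sqdist_le_of_edist ry2.
have weighted := sqdist_le_weighted x2 y m lam0.
rewrite sqdist_midpoint -/a !mulrDl !mul1r in weighted.
have lam_x2y : lam * sqdist x2 y <= lam * (A + 2) ^+ 2.
  apply: ler_wpM2l; first exact: ltW.
  by apply: le_trans x2y _; rewrite ler_pXn2r ?nnegrE //; lra.
have lam_c : lam^-1 * sqdist y m <= 4 * lam * (A + 1).
  have -> : 4 * lam * (A + 1) = lam^-1 * (4 * del * (A + 1)).
    by rewrite -lam2; field; rewrite gt_eqF.
  by apply: ler_wpM2l; [rewrite invr_ge0 ltW | lra].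
have : del * (A + 1) <= lam * (A + 1) by apply: ler_wpM2r; lra.
have : lam * (A + 8) ^+ 2 = lam * (A + 2) ^+ 2 + 12 * lam * (A + 1) + 48 * lam by ring.
rewrite -/lam; lra.
Qed.

End Triangle.

Section CoordinateSplit.
Variables (R : realType) (d : nat) (k0 : 'I_d).

Definition power_off (x y z : 'I_d -> R) :=
  \sum_(k | k != k0) (z k - x k) * (z k - y k) - ((x k0 - y k0) / 2) ^+ 2.

Lemma diam_power_split x y z :
  diam_power x y z = (z k0 - midpoint x y k0) ^+ 2 + power_off x y z.
Proof. by rewrite /diam_power (bigD1 k0) //= /power_off /midpoint; field. Qed.

Local Notation i0 := ((inord 2 : 'I_3), k0).

Lemma neq_pivot0 k : (ord0, k) != i0.
Proof. by rewrite xpair_eqE -val_eqE /= inordK. Qed.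

Lemma neq_pivot1 k : (inord 1, k) != i0.
Proof. by rewrite xpair_eqE -val_eqE /= !inordK. Qed.

Lemma neq_pivot2 k : k != k0 -> (inord 2, k) != i0.
Proof. by move=> kk0; rewrite xpair_eqE negb_and kk0 orbT. Qed.

Section Lipschitz.
Variables (h M : R) (p q : 'I_3 * 'I_d -> R).
Hypothesis pq : forall i, i != i0 -> `|p i - q i| <= h.
Hypothesis pM : forall i, i != i0 -> `|p i| <= M.
Hypothesis qM : forall i, i != i0 -> `|q i| <= M.

Lemma power_off_lipschitz :
  `|power_off (triple p ord0) (triple p (inord 1)) (triple p (inord 2)) -
    power_off (triple q ord0) (triple q (inord 1)) (triple q (inord 2))|
  <= (8 * d%:R + 2) * h * M.
Proof.
have diff i j : i != i0 -> j != i0 -> [/\ `|(p i - p j) - (q i - q j)| <= 2 * h,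
    `|p i - p j| <= 2 * M & `|q i - q j| <= 2 * M].
  move=> /[dup] i0i /pq + /[dup] j0j /pq.
  have := pM i0i; have := pM j0j; have := qM i0i; have := qM j0j.
  rewrite !ler_norml => /andP[? ?] /andP[? ?] /andP[? ?] /andP[? ?] /andP[? ?] /andP[? ?].
  by split; apply/andP; split; lra.
have h0 : 0 <= h := le_trans (normr_ge0 _) (pq (neq_pivot0 k0)).
have M0 : 0 <= M := le_trans (normr_ge0 _) (pM (neq_pivot0 k0)).
rewrite /power_off /triple.
have regroup (a b c e : R) : (a - b) - (c - e) = (a - c) - (b - e) by ring.
rewrite regroup -sumrB; apply: le_trans (ler_normB _ _) _.
have -> : (8 * d%:R + 2) * h * M = 8 * d%:R * h * M + 2 * h * M by ring.
apply: lerD.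
  apply: le_trans (ler_norm_sum _ _ _) _.
  apply: le_trans (_ : \sum_(k | k != k0) 8 * h * M <= _).
    apply: ler_sum => k kk0.
    have [e20 _ b20] := diff _ _ (neq_pivot2 kk0) (neq_pivot0 k).
    have [e21 a21 _] := diff _ _ (neq_pivot2 kk0) (neq_pivot1 k).
    by have := normrMB_le e20 e21 a21 b20; lra.
  apply: le_trans (_ : \sum_(k < d) 8 * h * M <= _).
    by rewrite [leRHS](bigD1 k0) //= lerDr !mulr_ge0.
  by rewrite sumr_const card_ord -mulr_natr; lra.
have [e01 a01 b01] := diff _ _ (neq_pivot0 k0) (neq_pivot1 k0).
by rewrite !expr2; apply: normrMB_le; rewrite -?mulrBl normrM normfV normr_nat; lra.
Qed.
End Lipschitz.
End CoordinateSplit.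

Section BadSet.
Variables (R : realType) (d : nat) (k0 : 'I_d).

Definition cube_radius (n : nat) : R := 3 * ln (n%:R : R) ^+ 2.

Lemma Wcube_radius n : powR (@s_plus R d n) d%:R^-1 / 2 = cube_radius n.
Proof.
have d0 : (0 < d)%N := leq_ltn_trans (leq0n k0) (ltn_ord k0).
have s0 : 0 <= 3 * @s_n R n by rewrite mulr_ge0 // mulr_ge0 // sqr_ge0.
rewrite /s_plus -(powR_mulrn _ s0) -powRrM mulfV ?pnatr_eq0 -?lt0n // powRr1 //.
by rewrite /s_n /cube_radius; field.
Qed.

Lemma bad_set_normr_le n (eps : R) x :
  @bad_set R d n eps x -> forall i, `|x i| <= cube_radius n.
Proof. by case=> W _ [j k]; rewrite -(Wcube_radius n); apply: W. Qed.

(* The width [sqrt (tau + 2 kap) + 2 h] of [sqr_shift_windows], with [tau] from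
   [diam_power_le] (taking [A = d B]) and [kap] from [power_off_lipschitz]. *)
Definition window_len (B del h : R) :=
  Num.sqrt (Num.sqrt del * (d%:R * B + 8) ^+ 2 + 2 * ((8 * d%:R + 2) * h * (B + h)))
  + 2 * h.

Definition window_start (B del h : R) (s : bool) (p : 'I_3 * 'I_d -> R) :=
  let m := midpoint (triple p ord0) (triple p (inord 1)) k0 in
  let g := power_off k0 (triple p ord0) (triple p (inord 1)) (triple p (inord 2)) in
  let r := Num.sqrt (- g - (8 * d%:R + 2) * h * (B + h)) in
  if s then m + r - h else m - r + h - window_len B del h.

Local Notation i0 := ((inord 2 : 'I_3), k0).

Lemma bad_set_in_window n (eps h : R) x p : 0 <= h ->
  let B := cube_radius n in let del := n%:R `^ (-2 + eps) in
  0 < del -> del <= 1 -> @bad_set R d n eps x ->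
  (forall i, i != i0 -> p i <= x i <= p i + h) ->
  exists s, window_start B del h s p <= x i0 <= window_start B del h s p + window_len B del h.
Proof.
move=> h0 B del del0 del1 xbad xp; have xB := bad_set_normr_le xbad; rewrite -/B in xB.
case: xbad => _ [lt le].
have dB : d01 (triple x ord0) (triple x (inord 1)) <= d%:R * B.
  by apply: d01_le => [|k|k]; rewrite ?xB // (le_trans (normr_ge0 _) (xB i0)).
have := diam_power_gt0 lt; have := diam_power_le dB del0 del1 le.
rewrite !(diam_power_split k0) => f1 f0.
have xp' i : i != i0 -> `|x i - p i| <= h /\ `|p i| <= B + h.
  move=> /xp; have := xB i; rewrite !ler_norml => /andP[? ?] /andP[? ?].
  by split; apply/andP; split; lra.
have hm : `|midpoint (triple x ord0) (triple x (inord 1)) k0 -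
            midpoint (triple p ord0) (triple p (inord 1)) k0| <= h.
  have [+ _] := xp' _ (neq_pivot0 k0 k0); have [+ _] := xp' _ (neq_pivot1 k0 k0).
  rewrite /midpoint /triple !ler_norml => /andP[? ?] /andP[? ?].
  by apply/andP; split; lra.
have hg : `|power_off k0 (triple x ord0) (triple x (inord 1)) (triple x (inord 2)) -
    power_off k0 (triple p ord0) (triple p (inord 1)) (triple p (inord 2))|
    <= (8 * d%:R + 2) * h * (B + h).
  by apply: power_off_lipschitz => i /xp' [] // _ _; rewrite ler_wpDr.
have [win|win] := sqr_shift_windows f0 f1 hm hg; [exists true | exists false];
  by move: win; rewrite /window_start /window_len /triple /=; lra.
Qed.

Lemma bad_set_outer_le n (eps : R) K : (1 < n)%N -> eps <= 2 -> (0 < K)%N ->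
  (lebesgue_outer (@bad_set R d n eps) <= (2 * (2 * cube_radius n) ^+ (3 * d).-1 *
     window_len (cube_radius n) (n%:R `^ (-2 + eps)) (2 * cube_radius n / K%:R))%:E)%E.
Proof.
move=> n1 eps2 K0; set B := cube_radius n; set del := n%:R `^ _; set h := 2 * B / K%:R.
have B0 : 0 < B by rewrite mulr_gt0 // exprn_gt0 // ln_gt0 // ltr1n.
have h0 : 0 <= h by rewrite divr_ge0 // mulr_ge0 // ltW.
have del0 : 0 < del by rewrite powR_gt0 // ltr0n ltnW.
have del1 : del <= 1.
  rewrite -[leRHS](powRr0 n%:R); apply: ler_powR; last lra.
  by rewrite ler1n ltnW.
have l0 : 0 <= window_len B del h by rewrite addr_ge0 ?sqrtr_ge0 // mulr_ge0.
have := lebesgue_outer_le_windows (i0 := i0) (L := window_start B del h) K0 (ltW B0) l0.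
rewrite card_bool card_prod !card_ord; apply=> [x /bad_set_normr_le xB i|x p xbad xp].
  by rewrite -ler_norml.
exact: bad_set_in_window.
Qed.

End BadSet.

Section Asymptotics.
Variable R : realType.
Implicit Types x g : R.

Lemma sqrt_sqrt_powR_le x (e : R) : 1 <= x -> e <= 1 / 2 ->
  Num.sqrt (Num.sqrt (x `^ (-2 + e))) <= x `^ (- (3 / 8)).
Proof.
move=> x1 e_le; rewrite -!powR12_sqrt ?powR_ge0 // -!powRrM.
by apply: ler_powR => //; lra.
Qed.

Lemma grid_mesh_le n (B : R) : (1 < n)%N -> 0 <= B ->
  2 * B / (n ^ 2)%:R <= B * (n%:R `^ (- (3 / 8))) ^+ 2.
Proof.
move=> n1 B0; have n0 : (0 < n)%N := ltnW n1.
have x1 : 1 <= n%:R :> R by rewrite ler1n.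
rewrite [2 * B]mulrC -mulrA ler_wpM2l // -powR_mulrn ?powR_ge0 // -powRrM.
apply: le_trans (_ : n%:R^-1 <= _); last first.
  by rewrite -[n%:R^-1]powR_inv1 ?ler0n //; apply: ler_powR => //; lra.
have -> : 2 / (n ^ 2)%:R = 2 / n%:R * n%:R^-1 :> R by rewrite natrX expr2 invfM mulrA.
by rewrite ler_piMl ?invr_ge0 // ler_pdivrMr ?ltr0n // mul1r ler_nat.
Qed.

Lemma ln_le_powR x g : 1 <= x -> 0 < g -> ln x <= x `^ g / g.
Proof.
move=> x1 g0; have xg0 : 0 < x `^ g by rewrite powR_gt0 //; lra.
rewrite ler_pdivlMr // mulrC -ln_powR; exact/ltW/ln_sublinear.
Qed.

Lemma cube_radius_le n g : (0 < n)%N -> 0 < g ->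
  cube_radius R n + 1 <= (3 / g ^+ 2 + 1) * n%:R `^ (2 * g).
Proof.
move=> n0 g0; have x1 : 1 <= n%:R :> R by rewrite ler1n.
have xg1 : 1 <= n%:R `^ (2 * g).
  by rewrite -[leLHS](powRr0 n%:R); apply: ler_powR => //; lra.
have ln_le := ln_le_powR x1 g0.
have sq : ln (n%:R : R) ^+ 2 <= n%:R `^ (2 * g) / g ^+ 2.
  rewrite [2 * g]mulrC powRrM powR_mulrn ?powR_ge0 // -expr_div_n.
  by rewrite ler_pXn2r ?nnegrE ?ln_ge0 ?divr_ge0 ?powR_ge0 // ltW.
rewrite /cube_radius; lra.
Qed.

Variable d : nat.
Hypothesis d_gt0 : (0 < d)%N.

Lemma window_len_le (B del h q : R) : 0 <= B -> 0 <= del ->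
  Num.sqrt (Num.sqrt del) <= q -> q <= 1 -> 0 <= h -> h <= B * q ^+ 2 ->
  window_len d B del h <= q * (9 * d%:R + 8) * (B + 1).
Proof.
move=> B0 del0 del_q q1 h0 h_le.
have q0 : 0 <= q := le_trans (sqrtr_ge0 _) del_q.
have d1 : 1 <= d%:R :> R by rewrite ler1n.
have hB : h <= B by apply: le_trans h_le _; rewrite ler_piMr // expr_le1.
have hq : h <= B * q by apply: le_trans h_le _; rewrite ler_wpM2l // expr2 ler_piMr.
have tau_le : Num.sqrt (Num.sqrt del * (d%:R * B + 8) ^+ 2) <= q * (d%:R * B + 8).
  have dB0 : 0 <= d%:R * B + 8 by rewrite addr_ge0 ?mulr_ge0.
  by rewrite sqrtrM ?sqrtr_ge0 // sqrtr_sqr ger0_norm // ler_wpM2r.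
have kap_le : Num.sqrt (2 * ((8 * d%:R + 2) * h * (B + h))) <= (8 * d%:R + 2) * B * q.
  rewrite -[leRHS]ger0_norm ?mulr_ge0 ?addr_ge0 ?mulr_ge0 // -sqrtr_sqr.
  apply: ler_wsqrtr; rewrite !exprMn.
  have : h * (B + h) <= B * q ^+ 2 * (2 * B) by apply: ler_pM; lra.
  have c0 : 0 <= 8 * d%:R + 2 :> R by lra.
  move/(ler_wpM2l c0); have X0 : 0 <= B ^+ 2 * q ^+ 2 by rewrite mulr_ge0 ?sqr_ge0.
  have : 4 * (8 * d%:R + 2) * (B ^+ 2 * q ^+ 2) <= (8 * d%:R + 2) ^+ 2 * (B ^+ 2 * q ^+ 2).
    by apply: ler_wpM2r => //; rewrite expr2 ler_wpM2r //; lra.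
  lra.
have wl : window_len d B del h <= q * (d%:R * B + 8) + (8 * d%:R + 2) * B * q + 2 * (B * q).
  rewrite /window_len; apply: lerD; last lra.
  apply: le_trans (sqrtrD_le _ _) (lerD tau_le kap_le).
  by rewrite mulr_ge0 ?sqrtr_ge0 ?sqr_ge0.
apply: le_trans wl _.
have : d%:R * B + 8 + (8 * d%:R + 2) * B + 2 * B <= (9 * d%:R + 8) * (B + 1) by lra.
by move/(ler_wpM2l q0); lra.
Qed.

Lemma window_len_at_le n (eps : R) : (1 < n)%N -> eps <= 1 / 2 ->
  window_len d (cube_radius R n) (n%:R `^ (-2 + eps)) (2 * cube_radius R n / (n ^ 2)%:R)
  <= n%:R `^ (- (3 / 8)) * (9 * d%:R + 8) * (cube_radius R n + 1).
Proof.
move=> n1 eps_le; set B := cube_radius R n.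
have x1 : 1 <= n%:R :> R by rewrite ler1n; apply: ltnW.
have B0 : 0 <= B by rewrite mulr_ge0 ?sqr_ge0.
have q1 : n%:R `^ (- (3 / 8)) <= 1 :> R.
  by rewrite -[leRHS](powRr0 n%:R); apply: ler_powR => //; lra.
apply: window_len_le (powR_ge0 _ _) (sqrt_sqrt_powR_le x1 eps_le) q1 _ (grid_mesh_le n1 B0) => //.
by rewrite divr_ge0 // mulr_ge0.
Qed.

Lemma cube_radius_pow_le n : (0 < n)%N ->
  (cube_radius R n + 1) ^+ (3 * d) <= (3 * (48 * d%:R) ^+ 2 + 1) ^+ (3 * d) * n%:R `^ (1 / 8).
Proof.
move=> n0; pose g : R := (48 * d%:R)^-1.
have dR : 0 < d%:R :> R by rewrite ltr0n.
have g0 : 0 < g by rewrite invr_gt0 mulr_gt0.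
have -> : 3 * (48 * d%:R) ^+ 2 + 1 = 3 / g ^+ 2 + 1 by rewrite /g exprVn invrK.
apply: le_trans (_ : ((3 / g ^+ 2 + 1) * n%:R `^ (2 * g)) ^+ (3 * d) <= _).
  apply: lerXn2r; last exact: cube_radius_le.
    by rewrite nnegrE addr_ge0 // mulr_ge0 ?sqr_ge0.
  by rewrite nnegrE mulr_ge0 ?powR_ge0 // addr_ge0 // divr_ge0 // sqr_ge0.
rewrite exprMn -[(n%:R `^ _) ^+ _]powR_mulrn ?powR_ge0 // -powRrM natrM.
by rewrite (_ : 2 * g * (3 * d%:R) = 1 / 8) // /g; field; rewrite gt_eqF.
Qed.

Lemma bad_set_outer_le_rate (eps : R) : eps <= 1 / 2 ->
  exists C : R, forall n, (1 < n)%N ->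
    (lebesgue_outer (@bad_set R d n eps) <= (C * n%:R `^ (- (1 / 4)))%:E)%E.
Proof.
move=> eps_le; pose m := (3 * d).-1; pose c : R := 3 * (48 * d%:R) ^+ 2 + 1.
pose K : R := 2 * 2 ^+ m * (9 * d%:R + 8).
have K0 : 0 <= K by rewrite !mulr_ge0 ?exprn_ge0 ?addr_ge0.
exists (K * c ^+ (3 * d)) => n n1; have n0 : (0 < n)%N := ltnW n1.
set B := cube_radius R n; pose q : R := n%:R `^ (- (3 / 8)).
have B0 : 0 <= B by rewrite mulr_ge0 ?sqr_ge0.
have qn : n%:R `^ (1 / 8) * q = n%:R `^ (- (1 / 4)).
  rewrite /q -powRD; last by rewrite pnatr_eq0 -lt0n n0 implybT.
  by have -> : 1 / 8 - 3 / 8 = - (1 / 4) :> R by lra.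
have n2 : (0 < n ^ 2)%N by rewrite expn_gt0 n0.
apply: le_trans (bad_set_outer_le (Ordinal d_gt0) n1 (_ : eps <= 2) n2) _; first lra.
rewrite lee_fin -/B -qn.
apply: le_trans (_ : 2 * (2 ^+ m * (B + 1) ^+ m) * (q * (9 * d%:R + 8) * (B + 1)) <= _).
  apply: ler_pM.
  - by rewrite mulr_ge0 // exprn_ge0 // mulr_ge0.
  - by rewrite addr_ge0 ?sqrtr_ge0 // mulr_ge0 // divr_ge0 // mulr_ge0.
  - by rewrite ler_wpM2l // -exprMn; apply: lerXn2r; rewrite ?nnegrE; lra.
  - exact: window_len_at_le.
have -> : 2 * (2 ^+ m * (B + 1) ^+ m) * (q * (9 * d%:R + 8) * (B + 1)) =
    K * (B + 1) ^+ (3 * d) * q.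
  have m1 : m.+1 = (3 * d)%N by rewrite prednK // muln_gt0 d_gt0.
  by rewrite -m1 exprS /K; ring.
have -> : K * c ^+ (3 * d) * (n%:R `^ (1 / 8) * q) = K * (c ^+ (3 * d) * n%:R `^ (1 / 8)) * q.
  by ring.
by rewrite (ler_wpM2r (powR_ge0 _ _)) // ler_wpM2l // cube_radius_pow_le.
Qed.

End Asymptotics.

Theorem mainTheorem10 (R : realType) (d : nat) (hd : (2 <= d)%N) :
  exists eps0 : R, 0 < eps0 /\
  forall eps : R, 0 < eps -> eps < eps0 ->
  exists C : R, exists N : nat, forall n : nat, (N <= n)%N ->
    (lebesgue_outer (@bad_set R d n eps) <= (C * powR (n%:R) (- (1 / 4)))%:E)%E.
Proof.
exists (1 / 2); split=> [|eps _ eps_lt]; first by rewrite divr_gt0.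
have [C rate] := bad_set_outer_le_rate (ltnW hd) (ltW eps_lt).
by exists C, 2%N.
Qed.
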